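(* For $n\ge1$ and $k\ge1$, let $a_{n,k}(\tau)$ denote the number of cyclic permutations $\pi\in\mathfrak S_n$ whose one-line notation avoids $\delta_k=k(k-1)\cdots21$ and whose cycle form $C(\pi)$ avoids $\tau$. Then $a_{n,k}(312)=a_{n,k}(213)$ for all $n\ge1$, $k\ge1$. Consequently the generating functions $f_k(z;312)=\sum_{n\ge1}a_{n,k}(312)z^n$ and $f_k(z;213)=\sum_{n\ge1}a_{n,k}(213)z^n$ are equal.
   Context: A permutation $\pi\in\mathfrak S_n$ is cyclic if it consists of a single $n$-cycle. For cyclic $\pi$, $C(\pi)=(1,c_2,\dots,c_n)$ with $c_2=\pi(1)$, $c_{i+1}=\pi(c_i)$, viewed as the sequence $1c_2\cdots c_n$ for pattern avoidance. A sequence avoids a pattern $\sigma\in\mathfrak S_m$ if no subsequence of length $m$ is in the same relative order as $\sigma$. The one-line notation of $\pi$ is $\pi_1\cdots\pi_n$, $\pi_i=\pi(i)$. *)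

From mathcomp Require Import all_boot all_order all_fingroup.
Set Implicit Arguments. Unset Strict Implicit. Unset Printing Implicit Defensive.

(* Permutations of [n] are modelled as {perm 'I_n}, i.e. on {0,...,n-1};
   a uniform shift by 1 does not affect relative order of values. *)

Definition same_order (s t : seq nat) : bool :=
  (size s == size t) &&
  [forall i : 'I_(size s), forall j : 'I_(size s),
     (nth 0 s i < nth 0 s j) == (nth 0 t i < nth 0 t j)].

Definition contains (sigma s : seq nat) : bool :=
  [exists m : (size s).-tuple bool, same_order (mask m s) sigma].

Definition avoids (sigma s : seq nat) : bool := ~~ contains sigma s.

Definition one_line n (p : {perm 'I_n}) : seq nat := [seq val (p i) | i <- enum 'I_n].

Definition cyclic_perm n (p : {perm 'I_n}) : bool :=
  [forall i : 'I_n, #|porbit p i| == n].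

Definition cycle_form n (p : {perm 'I_n.+1}) : seq nat :=
  [seq val ((p ^+ i)%g ord0) | i <- iota 0 n.+1].

Definition delta (k : nat) : seq nat := rev (iota 1 k).

(* a_{n+1,k}(tau) : permutations of [n+1] (n+1 >= 1) *)
Definition a_count_S (n k : nat) (tau : seq nat) : nat :=
  #|[set p : {perm 'I_n.+1} | [&& cyclic_perm p, avoids (delta k) (one_line p)
                                & avoids tau (cycle_form p)]]|.

From mathcomp Require Import all_boot all_order all_fingroup.
Set Implicit Arguments. Unset Strict Implicit. Unset Printing Implicit Defensive.

(* Inversion p |-> p^-1 is a bijection of the cyclic permutations onto
   themselves.  It preserves delta_k-avoidance of the one-line notation: a
   decreasing subsequence of p, pushed through p and read backwards, is a
   decreasing subsequence of p^-1.  On cycle forms it fixes the leading 1 and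
   reverses the rest: C(p^-1) = 1 c_n ... c_2.  The leading 1 is the minimum,
   so it cannot take part in an occurrence of 312 or of 213 (neither pattern
   starts with its minimum); hence C(p^-1) avoids 312 iff c_n ... c_2 does,
   iff c_2 ... c_n avoids rev 312 = 213, iff C(p) avoids 213. *)

Lemma same_orderP s t :
  reflect (size s = size t /\ forall i j, i < size s -> j < size s ->
             (nth 0 s i < nth 0 s j) = (nth 0 t i < nth 0 t j))
          (same_order s t).
Proof.
apply: (iffP andP) => [[/eqP Est /forallP Hst]|[Est Hst]]; split => //.
- by move=> i j Hi Hj; move/forallP/(_ (Ordinal Hj))/eqP: (Hst (Ordinal Hi)).
- exact/eqP.
- by apply/forallP => i; apply/forallP => j; rewrite Hst.
Qed.

Lemma containsP sigma s :
  reflect (exists2 u, subseq u s & same_order u sigma) (contains sigma s).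
Proof.
apply: (iffP existsP) => [[m Hm]|[u /subseqP[m Em ->] Hu]].
  by exists (mask m s); rewrite ?mask_subseq.
have Em' : size m == size s by rewrite Em.
by exists (Tuple Em').
Qed.

Lemma same_order_rev s t : same_order s t -> same_order (rev s) (rev t).
Proof.
move/same_orderP => [Est Hst]; apply/same_orderP; rewrite !size_rev.
split=> // i j Hi Hj; rewrite !nth_rev -?Est //.
by apply: Hst; rewrite subnSK // leq_subr.
Qed.

Lemma contains_rev sigma s : contains (rev sigma) (rev s) = contains sigma s.
Proof.
have contains_rev_of t u : contains t u -> contains (rev t) (rev u).
  case/containsP => v Hv Hvt; apply/containsP; exists (rev v).
    by rewrite subseq_rev.
  exact: same_order_rev.
apply/idP/idP; last exact: contains_rev_of.
by move/contains_rev_of; rewrite !revK.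
Qed.

Lemma contains_cons0 sigma t :
  1 < size sigma -> nth 0 sigma 1 < nth 0 sigma 0 ->
  contains sigma (0 :: t) = contains sigma t.
Proof.
move=> sigma_ge2 sigma_desc.
apply/containsP/containsP => -[u Hu Hus]; last first.
  by exists u => //; exact: subseq_trans Hu (subseq_cons t 0).
case: u Hu Hus => [|x u] /= Hu Hus; first by exists [::]; rewrite ?sub0seq.
case: eqP Hu => [x0 Hu|_ Hu]; last by exists (x :: u).
move/same_orderP: Hus => [Es Hs].
case: u Hu Hs Es => [|y u] _ Hs Es; first by rewrite -Es in sigma_ge2.
by move: (Hs 1 0 isT isT); rewrite /= x0 ltn0 sigma_desc.
Qed.

Lemma nth_delta k i : i < k -> nth 0 (delta k) i = k - i.
Proof.
move=> ltik; rewrite /delta nth_rev size_iota // nth_iota.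
  by rewrite add1n subnSK.
by rewrite subnSK // leq_subr.
Qed.

Lemma same_order_delta t k : same_order t (delta k) = (size t == k) && sorted gtn t.
Proof.
have size_delta : size (delta k) = k by rewrite size_rev size_iota.
rewrite sorted_pairwise; last exact: rev_trans ltn_trans.
apply/same_orderP/andP => [[Et Ht]|[/eqP Et /(pairwiseP 0) Ht]].
  rewrite size_delta in Et; split; first exact/eqP.
  apply/(pairwiseP 0) => i j Hi Hj ltij /=.
  by rewrite Ht // !nth_delta -?Et ?ltn_sub2l // (leq_ltn_trans ltij).
rewrite size_delta; split=> // i j Hi Hj; rewrite !nth_delta -?Et //.
case: (ltngtP i j) => [ltij|ltji|->]; last by rewrite !ltnn.
- have /ltnW le_ji : nth 0 t j < nth 0 t i by exact: Ht.
  by rewrite ltnNge le_ji ltnNge leq_sub2l // ltnW.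
- have -> : nth 0 t i < nth 0 t j by exact: Ht.
  by rewrite ltn_sub2l.
Qed.

Definition decreasing_subseq n (p : {perm 'I_n}) k :=
  exists u : seq 'I_n, [/\ sorted (relpre val ltn) u, size u = k &
                         sorted (relpre (val \o p) gtn) u].

Lemma sorted_enum_ord n : sorted (relpre val ltn) (enum 'I_n).
Proof. by rewrite -sorted_map val_enum_ord iota_ltn_sorted. Qed.

Lemma contains_delta_one_line n (p : {perm 'I_n}) k :
  contains (delta k) (one_line p) <-> decreasing_subseq p k.
Proof.
have ltn_ord_trans : transitive (relpre (val : 'I_n -> nat) ltn).
  by move=> a b c /=; exact: ltn_trans.
rewrite /one_line; split.
  case/containsP => _ /subseqP[m Em ->].
  rewrite same_order_delta -map_mask => /andP[/eqP Hsize Hsorted].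
  exists (mask m (enum 'I_n)); split.
  - apply: (subseq_sorted ltn_ord_trans (mask_subseq m _)).
    exact: sorted_enum_ord.
  - by rewrite -Hsize size_map.
  - by rewrite -sorted_map.
case=> u [Hu Hsize Hdec]; apply/containsP; exists [seq val (p i) | i <- u].
  apply/map_subseq/(subseq_uniqP (enum_uniq _)).
  apply: (irr_sorted_eq ltn_ord_trans) => //.
  - by move=> x /=; rewrite ltnn.
  - apply: (sorted_filter ltn_ord_trans); exact: sorted_enum_ord.
  - by move=> x; rewrite mem_filter mem_enum andbT.
by rewrite same_order_delta size_map Hsize eqxx sorted_map.
Qed.

Lemma decreasing_subseq_inv n (p : {perm 'I_n}) k :
  decreasing_subseq p k -> decreasing_subseq p^-1 k.
Proof.
case=> u [Hu Hsize Hdec]; exists (rev (map p u)); split.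
- by rewrite rev_sorted sorted_map.
- by rewrite size_rev size_map.
- rewrite rev_sorted sorted_map (eq_sorted (e' := relpre val ltn)) //.
  by move=> x y /=; rewrite !permK.
Qed.

Lemma avoids_delta_one_line_inv n (p : {perm 'I_n}) k :
  avoids (delta k) (one_line p^-1) = avoids (delta k) (one_line p).
Proof.
congr negb; apply/idP/idP => /contains_delta_one_line Hp;
  apply/contains_delta_one_line.
  by rewrite -[p]invgK; exact: decreasing_subseq_inv.
exact: decreasing_subseq_inv.
Qed.

Lemma cyclic_perm_inv n (p : {perm 'I_n}) : cyclic_perm p^-1 = cyclic_perm p.
Proof. by apply/forallP/forallP => Hp i; move: (Hp i); rewrite porbitV. Qed.

Lemma cyclic_perm_expS n (p : {perm 'I_n.+1}) :
  cyclic_perm p -> (p ^+ n.+1)%g ord0 = ord0.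
Proof.
move=> /forallP /(_ ord0) /eqP orbit0; rewrite permX -[in X in iter X]orbit0.
exact: iter_porbit.
Qed.

Lemma permVX_period (T : finType) (p : {perm T}) x a b :
  (p ^+ (a + b))%g x = x -> ((p^-1) ^+ a)%g x = (p ^+ b)%g x.
Proof.
by move=> period; rewrite -{1}period addnC expgD permM expgVn permK.
Qed.

Lemma cycle_form_head n (p : {perm 'I_n.+1}) :
  cycle_form p = 0 :: behead (cycle_form p).
Proof. by rewrite /cycle_form /= expg0 perm1. Qed.

Lemma cycle_form_inv n (p : {perm 'I_n.+1}) : cyclic_perm p ->
  cycle_form p^-1 = 0 :: rev (behead (cycle_form p)).
Proof.
move=> p_cyclic; rewrite cycle_form_head; congr (_ :: _).
apply: (@eq_from_nth _ 0); first by rewrite size_rev !size_map size_iota.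
rewrite /= size_map size_iota => i ltin.
rewrite nth_rev size_map size_iota // !(nth_map 0) ?size_iota ?subnSK ?leq_subr //.
rewrite !nth_iota ?subnSK ?leq_subr // !add1n.
rewrite (permVX_period (b := (n - i.+1).+1)) //.
by rewrite addnS subnKC // cyclic_perm_expS.
Qed.

Lemma avoids312_cycle_form_inv n (p : {perm 'I_n.+1}) : cyclic_perm p ->
  avoids [:: 3; 1; 2] (cycle_form p^-1) = avoids [:: 2; 1; 3] (cycle_form p).
Proof.
move=> p_cyclic; rewrite cycle_form_inv // [in RHS]cycle_form_head.
by rewrite /avoids !contains_cons0 // -contains_rev revK.
Qed.

Theorem theorem2p10 :
  forall m k : nat, 1 <= k ->
    a_count_S m k [:: 3; 1; 2] = a_count_S m k [:: 2; 1; 3].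
Proof.
move=> m k _; rewrite /a_count_S.
rewrite -(card_preimset _ (@invg_inj (perm_of (ordinal m.+1)))).
apply: eq_card => p; rewrite !inE cyclic_perm_inv avoids_delta_one_line_inv.
by case p_cyclic: (cyclic_perm p); rewrite //= avoids312_cycle_form_inv.
Qed.
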